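(* Let $\mathbf{B}$ be a binomial ring and let $x$ be an element of a divided power algebra over $\mathbf{B}$. Then for all $a\in\mathbf{B}$ and all positive integers $m$, $$a^m x^{[m]}=\sum_{k=1}^\infty\binom ak\sum_{\substack{g_1+\cdots+g_k=m\\ g_i\in\mathbb Z^+}}x^{[g_1]}\cdots x^{[g_k]}.$$
   Context: A binomial ring is a commutative unital ring, torsion-free as an abelian group, such that $\binom ak=a(a-1)\cdots(a-k+1)/k!\in\mathbf{B}$ for all $a\in\mathbf{B}$, $k\ge0$. In a divided power algebra, $x^{[g]}$ denotes the $g$-th divided power of $x$ (morally $x^g/g!$), satisfying $x^{[i]}x^{[j]}=\binom{i+j}ix^{[i+j]}$. The sum over $k$ is finite since the inner sum is empty for $k>m$. *)

From HB Require Import structures.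
From mathcomp Require Import all_boot all_order all_algebra.
Set Implicit Arguments. Unset Strict Implicit. Unset Printing Implicit Defensive.
Import Order.TTheory GRing.Theory Num.Theory.
Local Open Scope ring_scope.

Definition falling (B : comRingType) (a : B) (k : nat) : B :=
  \prod_(i < k) (a - i%:R).

(* B is a binomial ring and bin is its binomial-coefficient map:
   B is torsion-free as an abelian group, and bin a k = a(a-1)...(a-k+1)/k!
   (i.e. k! * bin a k = falling a k, which determines bin a k uniquely by
   torsion-freeness). *)
Record binomial_ring (B : comRingType) (bin : B -> nat -> B) : Prop := {
  binomial_torsion_free : forall (n : nat) (a : B), a *+ n.+1 = 0 -> a = 0;
  binomial_binP : forall (a : B) (k : nat), bin a k *+ k`! = falling a k
}.

Record is_ideal (A : comRingType) (I : {pred A}) : Prop := {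
  ideal0 : 0 \in I;
  idealD : forall x y, x \in I -> y \in I -> x + y \in I;
  idealM : forall (l x : A), x \in I -> l * x \in I
}.

(* (I, gam) is a divided power structure (PD ideal) on A
   (Berthelot--Ogus): gam n x = x^{[n]} for x in I. *)
Record pd_structure (A : comRingType) (I : {pred A}) (gam : nat -> A -> A)
  : Prop := {
  pd_ideal : is_ideal I;
  pd_gam0 : forall x, x \in I -> gam 0%N x = 1;
  pd_gam1 : forall x, x \in I -> gam 1%N x = x;
  pd_gamI : forall n x, x \in I -> (0 < n)%N -> gam n x \in I;
  pd_gamD : forall n x y, x \in I -> y \in I ->
      gam n (x + y) = \sum_(i < n.+1) gam i x * gam (n - i)%N y;
  pd_gamZ : forall n (l x : A), x \in I -> gam n (l * x) = l ^+ n * gam n x;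
  pd_gamM : forall i j x, x \in I ->
      gam i x * gam j x = 'C(i + j, i)%:R * gam (i + j)%N x;
  pd_gamC : forall m n x, x \in I -> (0 < n)%N ->
      gam m (gam n x) = ((m * n)`! %/ (m`! * (n`! ^ m)))%:R * gam (m * n)%N x
}.

From HB Require Import structures.
From mathcomp Require Import all_boot all_order all_algebra.
From mathcomp Require Import zify.
Import GRing.Theory.
Local Open Scope ring_scope.

(* Expand a^m in falling factorials: a^m = sum_k S(m,k) a(a-1)...(a-k+1) with
   S the Stirling numbers of the second kind, so that a^m x^[m] =
   sum_k binom(a,k) k! S(m,k) x^[m].  On the other side, the inner sum over
   compositions of m into k positive parts is the coefficient of X^m in P^k,
   where P = sum_(1 <= j <= m) x^[j] X^j; the product rule
   x^[i] x^[j] = binom(i+j,i) x^[i+j] and the recurrence for S give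
   [X^m] P^k = k! S(m,k) x^[m]. *)

Fixpoint stirling2 (n k : nat) : nat :=
  match n, k with
  | 0, _ => (k == 0)%N
  | _.+1, 0 => 0
  | n.+1, k.+1 => stirling2 n k + k.+1 * stirling2 n k.+1
  end.

Lemma stirling2_small n k : (n < k)%N -> stirling2 n k = 0%N.
Proof.
elim: n k => [|n IHn] [|k] //= ltnk.
by rewrite !IHn // ?muln0 // ltnW.
Qed.

Lemma sum_bin_stirling2 n k :
  (\sum_(i < n) 'C(n, i.+1) * stirling2 (n - i.+1) k = k.+1 * stirling2 n k.+1)%N.
Proof.
elim: n k => [|n IHn] k; first by rewrite big_ord0 muln0.
have -> : (\sum_(i < n.+1) 'C(n.+1, i.+1) * stirling2 (n.+1 - i.+1) k =
           \sum_(i < n.+1) 'C(n, i) * stirling2 (n - i) k +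
           \sum_(i < n.+1) 'C(n, i.+1) * stirling2 (n - i) k)%N.
  by rewrite -big_split; apply: eq_bigr => i _; rewrite subSS binS mulnDl addnC.
rewrite big_ord_recl bin0 subn0 mul1n big_ord_recr /= bin_small // mul0n addn0.
under eq_bigr => i _ do rewrite /bump /= add1n.
under [X in (_ + _ + X)%N]eq_bigr => i _ do rewrite -subnSK //.
rewrite IHn; case: k => [|k].
  by rewrite big1 ?addn0 ?mul1n // => i _; rewrite /= muln0.
under eq_bigr => i _ do rewrite /= mulnDr mulnCA.
by rewrite big_split /= -big_distrr /= !IHn; lia.
Qed.

Lemma mul_falling (R : comNzRingType) (a : R) k :
  a * falling a k = falling a k.+1 + falling a k *+ k.
Proof.
by rewrite /falling big_ord_recr /= mulrBr mulr_natr addrNK mulrC.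
Qed.

Lemma expr_falling (R : comNzRingType) (a : R) m :
  a ^+ m = \sum_(k < m.+1) falling a k *+ stirling2 m k.
Proof.
elim: m => [|m IHm]; first by rewrite big_ord1 /falling big_ord0.
rewrite exprS IHm mulr_sumr.
under eq_bigr => k _ do rewrite mulrnAr mul_falling mulrnDl -mulrnA.
rewrite big_split /= [RHS]big_ord_recl /= mulr0n add0r.
under [RHS]eq_bigr => k _ do rewrite /bump /= add1n mulrnDr.
rewrite big_split /=; congr (_ + _).
rewrite big_ord_recl mul0n mulr0n add0r big_ord_recr /= stirling2_small //.
by rewrite muln0 mulr0n addr0; apply: eq_bigr => k _; rewrite /bump /= add1n.
Qed.

Section TruncatedDividedPowerSeries.

Variables (A : comNzRingType) (g : nat -> A) (m : nat).

Definition dp_trunc : {poly A} := \poly_(j < m.+1) (if j == 0%N then 0 else g j).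

Lemma coef_dp_trunc j : (j <= m)%N -> dp_trunc`_j = if j == 0%N then 0 else g j.
Proof. by rewrite coef_poly ltnS => ->. Qed.

Lemma coef_dp_trunc_exp_compositions k :
  (dp_trunc ^+ k)`_m = \sum_(f : {ffun 'I_k -> 'I_m.+1}
                          | ((\sum_(i < k) (f i : nat))%N == m) && [forall i, (0 < f i)%N])
                        \prod_(i < k) g (f i : nat).
Proof.
rewrite -[k in _ ^+ k]card_ord -prodr_const /dp_trunc poly_def bigA_distr_bigA coef_sum.
rewrite [RHS]big_mkcond; apply: eq_bigr => f _.
have -> : \prod_(i < k) ((if f i == 0%N :> nat then 0 else g (f i)) *: 'X^(f i)) =
          (\prod_(i < k) (if f i == 0%N :> nat then 0 else g (f i)))
            *: 'X^(\sum_(i < k) (f i : nat)).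
  by rewrite scaler_prod prodrXr.
rewrite coefZ coefXn eq_sym; case: eqP => _ /=; last by rewrite mulr0.
rewrite mulr1; case: ifP => [/forallP f_gt0 | /negbT/forallPn[i f_i0]].
  by apply: eq_bigr => i _; rewrite eqn0Ngt f_gt0.
by move: f_i0; rewrite -eqn0Ngt => /eqP f_i0; rewrite (bigD1 i) //= f_i0 mul0r.
Qed.

Hypothesis g0 : g 0%N = 1.
Hypothesis gM : forall i j, g i * g j = 'C(i + j, i)%:R * g (i + j)%N.

Lemma coef_dp_trunc_exp k n :
  (n <= m)%N -> (dp_trunc ^+ k)`_n = (k`! * stirling2 n k)%:R * g n.
Proof.
elim: k n => [|k IHk] n le_nm.
  by rewrite expr0 coef1 fact0 mul1n; case: n le_nm => [|n] _ /=; rewrite ?g0 ?mulr1 ?mul0r.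
rewrite exprS coefM big_ord_recl coef_dp_trunc // eqxx mul0r add0r.
have -> : \sum_(i < n) dp_trunc`_(lift ord0 i) * (dp_trunc ^+ k)`_(n - lift ord0 i) =
          \sum_(i < n) ('C(n, i.+1) * (k`! * stirling2 (n - i.+1) k))%:R * g n.
  apply: eq_bigr => i _; have lt_in := ltn_ord i.
  rewrite /= /bump /= add1n coef_dp_trunc ?(leq_trans lt_in) //=.
  rewrite IHk ?(leq_trans (leq_subr _ _) le_nm) //.
  by rewrite mulrCA gM subnKC // !natrM !mulrA; congr (_ * _); rewrite mulrC mulrA.
rewrite -big_distrl /= -natr_sum.
under eq_bigr => i _ do rewrite mulnCA.
by rewrite -big_distrr /= sum_bin_stirling2 factS mulnCA mulnA.
Qed.

End TruncatedDividedPowerSeries.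

Theorem mainTheorem20 (B : comRingType) (bin : B -> nat -> B)
  (hB : binomial_ring bin)
  (A : comAlgType B) (I : {pred A}) (gam : nat -> A -> A)
  (hPD : pd_structure I gam)
  (x : A) (hx : x \in I) (a : B) (m : nat) (hm : (0 < m)%N) :
  a ^+ m *: gam m x =
  \sum_(1 <= k < m.+1)
     bin a k *: \sum_(g : {ffun 'I_k -> 'I_m.+1}
                       | ((\sum_(i < k) (g i : nat))%N == m) && [forall i, (0 < g i)%N])
                   \prod_(i < k) gam (g i : nat) x.
Proof.
have gam0 := pd_gam0 hPD hx.
have gamM i j := pd_gamM hPD i j hx.
under eq_bigr => k _ do
  rewrite -(coef_dp_trunc_exp_compositions _ (gam^~ x)) (coef_dp_trunc_exp _ _ _ gam0 gamM) //
          mulr_natl -scalerMnr scalerMnl mulrnA (binomial_binP hB).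
rewrite -scaler_suml expr_falling big_ord_recl big_add1 big_mkord.
by case: m hm => // m _; rewrite mulr0n add0r.
Qed.
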